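(* Every right quasi-duo exchange ring is feckly clean, and every left quasi-duo exchange ring is feckly clean.
   Context: Rings are associative with identity, not necessarily commutative; $J(R)$ is the Jacobson radical. A ring is right (resp. left) quasi-duo if every maximal right (resp. left) ideal is a two-sided ideal. A ring $R$ is an exchange ring if for every $a\in R$ there is an idempotent $e\in R$ with $e\in aR$ and $1-e\in(1-a)R$. An element $u\in R$ is full if $RuR=R$. An element $a\in R$ is feckly clean if there exist $e\in R$ and a full element $u\in R$ with $a=e+u$ and $eR(1-e)\subseteq J(R)$; $R$ is feckly clean if every element is feckly clean. *)

From HB Require Import structures.
From mathcomp Require Import all_boot all_order all_algebra.
Set Implicit Arguments. Unset Strict Implicit. Unset Printing Implicit Defensive.
Import GRing.Theory.
Local Open Scope ring_scope.

Definition right_ideal (R : nzRingType) (I : R -> Prop) : Prop :=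
  I 0 /\ (forall a b, I a -> I b -> I (a + b)) /\ (forall a r, I a -> I (a * r)).

Definition left_ideal (R : nzRingType) (I : R -> Prop) : Prop :=
  I 0 /\ (forall a b, I a -> I b -> I (a + b)) /\ (forall a r, I a -> I (r * a)).

Definition two_sided_ideal (R : nzRingType) (I : R -> Prop) : Prop :=
  right_ideal I /\ left_ideal I.

Definition maximal_right_ideal (R : nzRingType) (I : R -> Prop) : Prop :=
  right_ideal I /\ ~ I 1 /\
  (forall J : R -> Prop, right_ideal J -> (forall x, I x -> J x) ->
     ~ J 1 -> forall x, J x -> I x).

Definition maximal_left_ideal (R : nzRingType) (I : R -> Prop) : Prop :=
  left_ideal I /\ ~ I 1 /\
  (forall J : R -> Prop, left_ideal J -> (forall x, I x -> J x) ->
     ~ J 1 -> forall x, J x -> I x).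

Definition jacobson (R : nzRingType) (x : R) : Prop :=
  forall I : R -> Prop, maximal_right_ideal I -> I x.

Definition right_quasi_duo (R : nzRingType) : Prop :=
  forall I : R -> Prop, maximal_right_ideal I -> two_sided_ideal I.

Definition left_quasi_duo (R : nzRingType) : Prop :=
  forall I : R -> Prop, maximal_left_ideal I -> two_sided_ideal I.

Definition exchange_ring (R : nzRingType) : Prop :=
  forall a : R, exists e : R,
    e * e = e /\ (exists r, e = a * r) /\ (exists s, 1 - e = (1 - a) * s).

(* u is full: RuR = R, i.e. 1 is a finite sum of elements x * u * y *)
Definition full (R : nzRingType) (u : R) : Prop :=
  exists s : seq (R * R), \sum_(p <- s) p.1 * u * p.2 = 1.

Definition feckly_clean_elt (R : nzRingType) (a : R) : Prop :=
  exists e u : R, full u /\ a = e + u /\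
    (forall r : R, jacobson (e * r * (1 - e))).

Definition feckly_clean (R : nzRingType) : Prop :=
  forall a : R, feckly_clean_elt a.

From mathcomp Require Import all_boot all_order all_algebra.
From mathcomp Require Import classical_sets.
From Stdlib Require Import Classical.
Import GRing.Theory.
Local Open Scope ring_scope.
Set Implicit Arguments. Unset Strict Implicit. Unset Printing Implicit Defensive.

(* Given a, the exchange property yields an idempotent e with e in aR and
   1 - e in (1 - a)R.  Then a = (1 - e) + (a - (1 - e)), and a - (1 - e) is
   full because e and 1 - e can be recovered from it by multiplying on both
   sides.  It remains to show that the corner (1 - e)R e lies in J(R).  If
   every maximal right ideal is two-sided, each one contains e or 1 - e, hence
   the corner.  If every maximal left ideal is two-sided, the same argument
   puts the corner in every maximal left ideal; such an element y lies in
   every maximal right ideal I, for otherwise 1 = i + yz with i in I, and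
   i = 1 - yz is a unit because yz again lies in every maximal left ideal. *)

Section Idempotents.
Variables (R : nzRingType) (e : R).
Hypothesis ee : e * e = e.

Lemma idemp_compl_mul : (1 - e) * e = 0.
Proof. by rewrite mulrBl mul1r ee subrr. Qed.

Lemma idemp_mul_compl : e * (1 - e) = 0.
Proof. by rewrite mulrBr mulr1 ee subrr. Qed.

Lemma idemp_compl : (1 - e) * (1 - e) = 1 - e.
Proof. by rewrite mulrBr mulr1 idemp_compl_mul subr0. Qed.

End Idempotents.

Lemma exchange_full (R : nzRingType) (a e r s : R) : e * e = e -> e = a * r ->
  1 - e = (1 - a) * s -> full (a - (1 - e)).
Proof.
move=> ee er es.
(* e (a - (1 - e)) = e a and -(1 - e) (a - (1 - e)) = (1 - e)(1 - a), so
   the two terms below are e a r e = e and (1 - e)(1 - a) s (1 - e) = 1 - e. *)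
exists [:: (e, r * e); (- (1 - e), s * (1 - e))].
rewrite big_cons big_cons big_nil addr0 /=.
have -> : e * (a - (1 - e)) = e * a by rewrite mulrBr idemp_mul_compl // subr0.
have -> : - (1 - e) * (a - (1 - e)) = (1 - e) * (1 - a).
  by rewrite mulNr mulrBr idemp_compl // mulrBr mulr1 opprB.
rewrite !mulrA -(mulrA e a r) -er ee ee.
by rewrite -(mulrA (1 - e) (1 - a) s) -es !idemp_compl // addrC subrK.
Qed.

Section MaximalRightIdeals.
Variable R : nzRingType.
Implicit Types (I : R -> Prop) (e y : R).

Lemma maximal_right_ideal_comaximal I y : maximal_right_ideal I -> ~ I y ->
  exists i z, I i /\ i + y * z = 1.
Proof.
move=> [[I0 [ID IM]] [_ Imax]] nIy.
pose K (x : R) := exists i z, I i /\ x = i + y * z.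
have Kr : right_ideal K.
  split; first by exists 0, 0; rewrite mulr0 addr0.
  split.
    move=> a b [i [z [Ii ->]]] [j [w [Ij ->]]].
    by exists (i + j), (z + w); rewrite mulrDr addrACA; split => //; apply: ID.
  move=> a r [i [z [Ii ->]]].
  by exists (i * r), (z * r); rewrite mulrDl mulrA; split => //; apply: IM.
have IK (x : R) : I x -> K x by move=> Ix; exists x, 0; rewrite mulr0 addr0.
have [i [z [Ii E]]] : K 1.
  apply: NNPP => nK1; apply: nIy; apply: (Imax K Kr IK nK1).
  by exists 0, 1; rewrite mulr1 add0r.
by exists i, z.
Qed.

Lemma maximal_right_ideal_idempotent I e : e * e = e ->
  maximal_right_ideal I -> left_ideal I -> I e \/ I (1 - e).
Proof.
move=> ee maxI [_ [_ IL]].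
have [Ie | nIe] := classic (I e); [by left | right].
have [i [z [Ii E]]] := maximal_right_ideal_comaximal maxI nIe.
have <- : (1 - e) * i = 1 - e.
  have -> : i = 1 - e * z by rewrite -E addrK.
  by rewrite mulrBr mulr1 mulrA idemp_compl_mul // mul0r subr0.
exact: IL.
Qed.

End MaximalRightIdeals.

Section MaximalIdeals.
Variable R : nzRingType.
Implicit Types (I L : R -> Prop) (e t x y : R).

Lemma right_ideal_converse L : right_ideal L -> @left_ideal R^c L.
Proof. by []. Qed.

Lemma maximal_left_ideal_converse L :
  maximal_left_ideal L -> @maximal_right_ideal R^c L.
Proof. by []. Qed.

Lemma maximal_left_ideal_idempotent L e : e * e = e ->
  maximal_left_ideal L -> right_ideal L -> L e \/ L (1 - e).
Proof.
move=> ee /maximal_left_ideal_converse maxL /right_ideal_converse.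
exact: (@maximal_right_ideal_idempotent R^c L e).
Qed.

Lemma two_sided_ideal_corner I e x : two_sided_ideal I ->
  I e \/ I (1 - e) -> I (e * x * (1 - e)).
Proof.
move=> [[_ [_ IM]] [_ [_ IL]]] [Ie | Ie]; last exact: IL.
exact: IM _ _ (IM _ _ Ie).
Qed.

Lemma proper_left_ideal_sub_maximal (J : R -> Prop) : left_ideal J -> ~ J 1 ->
  exists L, maximal_left_ideal L /\ (forall x, J x -> L x).
Proof.
move=> Jl nJ1.
(* set0 is admitted so that the union of the empty chain satisfies P. *)
pose P (A : set R) :=
  A = set0 \/ [/\ left_ideal A, ~ A 1 & forall x, J x -> A x].
have [A [PA Amax]] : exists A, P A /\ forall B, (A `<` B)%classic -> ~ P B.
  apply: Zorn_bigcup => F FP Ftot.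
  have [[X0 FX0 nX0] | emptyF] := classic (exists2 X, F X & X <> set0);
    last first.
    left; apply/seteqP; split => // y [X FX Xy]; apply: emptyF; exists X => //.
    by move=> X0; rewrite X0 in Xy.
  have PF X : F X -> X <> set0 ->
      [/\ left_ideal X, ~ X 1 & forall x, J x -> X x].
    by move=> FX; case: (FP X FX).
  have [[X00 _] _ JX0] := PF X0 FX0 nX0.
  have PF' X a : F X -> X a -> [/\ left_ideal X, ~ X 1 & forall x, J x -> X x].
    by move=> FX Xa; apply: PF => // X0E; rewrite X0E in Xa.
  right; split.
  - split; first by exists X0.
    split.
      move=> a b [X FX Xa] [Y FY Yb].
      have [XY | YX] := Ftot X Y FX FY.
        have [[_ [YD _]] _ _] := PF' Y b FY Yb.
        by exists Y => //; apply: YD => //; apply: XY.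
      have [[_ [XD _]] _ _] := PF' X a FX Xa.
      by exists X => //; apply: XD => //; apply: YX.
    move=> a r [X FX Xa]; have [[_ [_ XM]] _ _] := PF' X a FX Xa.
    by exists X => //; apply: XM.
  - by move=> [X FX X1]; have [_ nX1 _] := PF' X 1 FX X1.
  - by move=> x Jx; exists X0 => //; apply: JX0.
have [A0 | [Al nA1 JA]] := PA.
  exfalso; apply: (Amax J); last by right.
  by rewrite A0; split => // /(_ 0 Jl.1).
exists A; split => //; split => //; split => // K Kl AK nK1 x Kx.
apply: NNPP => nAx; apply: (Amax K); last by right; split => // y /JA /AK.
by split => // KA; apply/nAx/KA.
Qed.

Definition left_jacobson x := forall L, maximal_left_ideal L -> L x.

Lemma left_jacobsonMl r t : left_jacobson t -> left_jacobson (r * t).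
Proof.
by move=> Jt L maxL; have [[_ [_ LM]] _] := maxL; exact: LM _ _ (Jt L maxL).
Qed.

Lemma left_jacobson_linv t : left_jacobson t -> exists v, v * (1 - t) = 1.
Proof.
move=> Jt; apply: NNPP => nlinv.
pose Rt x := exists w, x = w * (1 - t).
have Rtl : left_ideal Rt.
  split; first by exists 0; rewrite mul0r.
  split; first by move=> a b [w ->] [v ->]; exists (w + v); rewrite mulrDl.
  by move=> a r [w ->]; exists (r * w); rewrite mulrA.
have [|L [maxL RtL]] := proper_left_ideal_sub_maximal Rtl.
  by move=> [w E]; apply: nlinv; exists w.
have [[_ [LD _]] [nL1 _]] := maxL.
apply: nL1; rewrite -(subrK t 1); apply: LD; last exact: Jt.
by apply: RtL; exists 1; rewrite mul1r.
Qed.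

Lemma left_jacobson_unit t : left_jacobson t ->
  exists v, v * (1 - t) = 1 /\ (1 - t) * v = 1.
Proof.
move=> Jt; have [v vt] := left_jacobson_linv Jt.
have v_eq : v = 1 - - (v * t) by rewrite opprK -vt mulrBr mulr1 subrK.
have [w wv] := left_jacobson_linv (left_jacobsonMl (- v) Jt).
rewrite mulNr -v_eq in wv.
have w_eq : w = 1 - t by rewrite -[w]mulr1 -{1}vt mulrA wv mul1r.
by exists v; split; rewrite // -w_eq.
Qed.

Lemma left_quasi_duo_jacobson y :
  left_quasi_duo R -> left_jacobson y -> jacobson y.
Proof.
move=> lqd Jy I maxI; apply: NNPP => nIy.
have [i [z [Ii E]]] := maximal_right_ideal_comaximal maxI nIy.
have Jyz : left_jacobson (y * z).
  move=> L maxL; have [[_ [_ LM]] _] := lqd L maxL.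
  exact: LM _ _ (Jy L maxL).
have [v [_ iv]] := left_jacobson_unit Jyz.
have [[_ [_ IM]] [nI1 _]] := maxI.
by apply: nI1; rewrite -iv -E addrK; apply: IM.
Qed.

Lemma right_quasi_duo_corner_jacobson e x : right_quasi_duo R -> e * e = e ->
  jacobson (e * x * (1 - e)).
Proof.
move=> rqd ee I maxI; have Iideal := rqd I maxI.
apply: two_sided_ideal_corner => //.
exact: maximal_right_ideal_idempotent ee maxI Iideal.2.
Qed.

Lemma left_quasi_duo_corner_left_jacobson e x : left_quasi_duo R ->
  e * e = e -> left_jacobson (e * x * (1 - e)).
Proof.
move=> lqd ee L maxL; have Lideal := lqd L maxL.
apply: two_sided_ideal_corner => //.
exact: maximal_left_ideal_idempotent ee maxL Lideal.1.
Qed.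

End MaximalIdeals.

Theorem theorem4p5 (R : nzRingType) :
  exchange_ring R -> (right_quasi_duo R \/ left_quasi_duo R) -> feckly_clean R.
Proof.
move=> exch qd a.
have [e [ee [[r er] [s es]]]] := exch a.
exists (1 - e), (a - (1 - e)); split; first exact: exchange_full ee er es.
split; first by rewrite addrC subrK.
move=> x; have idemp_ce := idemp_compl ee.
case: qd => [rqd | lqd].
  exact: right_quasi_duo_corner_jacobson rqd idemp_ce.
apply: (left_quasi_duo_jacobson lqd).
exact: left_quasi_duo_corner_left_jacobson x lqd idemp_ce.
Qed.
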